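(* Let $X$ be an $n$-dimensional projective space over a field, $K$ a $k$-dimensional subspace of $X$, and let $s_1,s_2,t_1,t_2$ be integers with $-1\le t_1\le s_1\le\dim K$ and $-1\le t_2\le s_2\le\dim(X/K)$. Put $t:=t_1+t_2+1$ and $s:=s_1+s_2+1$. If $\mathcal B_K\subseteq\mathrm{Gr}_{t_1}(K)$ blocks $\mathcal S_K\subseteq\mathrm{Gr}_{s_1}(K)$ and $\mathcal B_{X/K}\subseteq\mathrm{Gr}_{t_2}(X/K)$ blocks $\mathcal S_{X/K}\subseteq\mathrm{Gr}_{s_2}(X/K)$, then $\mathcal B\subseteq\mathrm{Gr}_t(X)$ blocks $\mathcal S\subseteq\mathrm{Gr}_s(X)$, where $$\mathcal B:=\{T\in\mathrm{Gr}(X): K\cap T\in\mathcal B_K,\ \langle K,T\rangle\in\mathcal B_{X/K}\},\qquad \mathcal S:=\{S\in\mathrm{Gr}(X):K\cap S\in\mathcal S_K,\ \langle K,S\rangle\in\mathcal S_{X/K}\}.$$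
   Context: Projective dimension is used (the empty subspace has dimension $-1$). $\mathrm{Gr}_d(Y)$ denotes the set of $d$-dimensional subspaces of a projective space $Y$ and $\mathrm{Gr}(Y)$ the set of all subspaces. For a $k$-dimensional subspace $K$ of $X$, the quotient space $X/K$ is the projective space of dimension $\dim X-k-1$ whose $r$-dimensional subspaces are the $(r+k+1)$-dimensional subspaces of $X$ containing $K$ (its $(-1)$-dimensional subspace is $K$); the span $\langle K,T\rangle$ is regarded as an element of $X/K$, and containment in $X/K$ is containment in $X$. For $t\le s$, a set $\mathcal B$ of $t$-dimensional subspaces of a projective space is said to block a set $\mathcal S$ of $s$-dimensional subspaces (or be a partial blocking set for $\mathcal S$) if every $S\in\mathcal S$ contains some $T\in\mathcal B$. *)

(* The n-dimensional projective space over a field F is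
   modelled as PG(n,F): its subspaces are the vector subspaces of
   F^(n+1) = 'rV[F]_(n.+1), with projective dimension = vector dim - 1. *)
From HB Require Import structures.
From mathcomp Require Import all_boot all_order all_algebra.
Set Implicit Arguments. Unset Strict Implicit. Unset Printing Implicit Defensive.
Import GRing.Theory Num.Theory.
Local Open Scope ring_scope.

Section Proj.
Variables (F : fieldType) (n : nat).
Notation V := ('rV[F]_(n.+1)).

Definition pdim (U : {vspace V}) : int := (\dim U)%:Z - 1.

Definition GrX (d : int) (U : {vspace V}) : Prop := pdim U = d.

Definition GrSub (K : {vspace V}) (d : int) (U : {vspace V}) : Prop :=
  (U <= K)%VS /\ pdim U = d.

(* dimension, inside the quotient X/K, of a subspace containing K *)
Definition qdim (K U : {vspace V}) : int := pdim U - pdim K - 1.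

Definition GrQuot (K : {vspace V}) (d : int) (U : {vspace V}) : Prop :=
  (K <= U)%VS /\ qdim K U = d.

Definition blocks (B S : {vspace V} -> Prop) : Prop :=
  forall S0, S S0 -> exists2 T, B T & (T <= S0)%VS.

Definition subfam (A B : {vspace V} -> Prop) : Prop := forall U, A U -> B U.
End Proj.

(* Dimensions: [dim T = dim (K ∩ T) + dim (K + T) - dim K], which in projective
   terms reads [pdim T = pdim (K ∩ T) + qdim K (K + T) + 1].
   Blocking: given [S], pick [T1] in [B_K] inside [K ∩ S] and [T2] in [B_{X/K}]
   inside [K + S], and let [W] be a complement of [K] in [T2 ∩ S]. Then
   [T := T1 + W] lies in [S], and the modular law gives [K ∩ T = T1] (as
   [W ∩ K = 0]) and [K + T = K + (T2 ∩ S) = T2 ∩ (K + S) = T2]. *)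
From HB Require Import structures.
From mathcomp Require Import all_boot all_order all_algebra.
From mathcomp Require Import zify.
Set Implicit Arguments. Unset Strict Implicit. Unset Printing Implicit Defensive.
Import GRing.Theory Num.Theory.
Local Open Scope ring_scope.

Lemma exists_subv_with_capv_addv (F : fieldType) (vT : vectType F)
    (K S T1 T2 : {vspace vT}) :
  (T1 <= K :&: S)%VS -> (K <= T2)%VS -> (T2 <= K + S)%VS ->
  exists2 T, (T <= S)%VS & (K :&: T)%VS = T1 /\ (K + T)%VS = T2.
Proof.
rewrite subv_cap => /andP[sT1K sT1S] sKT2 sT2KS.
set W := (T2 :&: S :\: K)%VS.
have sWS : (W <= S)%VS by apply: subv_trans (diffvSl _ _) (capvSr _ _).
exists (T1 + W)%VS; first by rewrite subv_add sT1S sWS.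
split.
- by rewrite addvC -vspace_modr // capvC capv_diff add0v.
- rewrite addvA (addv_idPl sT1K) addvC addv_diff addvC.
  by rewrite capvC vspace_modl //; apply/capv_idPr.
Qed.

Lemma pdim_capv_qdim_addv (F : fieldType) (n : nat) (K T : {vspace 'rV[F]_(n.+1)}) :
  pdim T = pdim (K :&: T)%VS + qdim K (K + T)%VS + 1.
Proof. by rewrite /qdim /pdim; have := dimv_sum_cap K T; lia. Qed.

Theorem lemma3p5 (F : fieldType) (n : nat) (K : {vspace 'rV[F]_(n.+1)})
  (k s1 s2 t1 t2 : int)
  (BK SK BQ SQ : {vspace 'rV[F]_(n.+1)} -> Prop) :
  pdim K = k ->
  -1 <= t1 -> t1 <= s1 -> s1 <= k ->
  -1 <= t2 -> t2 <= s2 -> s2 <= (n%:Z - k - 1) ->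
  subfam BK (GrSub K t1) -> subfam SK (GrSub K s1) -> blocks BK SK ->
  subfam BQ (GrQuot K t2) -> subfam SQ (GrQuot K s2) -> blocks BQ SQ ->
  let t := t1 + t2 + 1 in
  let s := s1 + s2 + 1 in
  let B := fun T => BK (K :&: T)%VS /\ BQ (K + T)%VS in
  let S := fun S0 => SK (K :&: S0)%VS /\ SQ (K + S0)%VS in
  [/\ subfam B (GrX t), subfam S (GrX s) & blocks B S].
Proof.
move=> _ _ _ _ _ _ _ BK_t1 SK_s1 blocksK BQ_t2 SQ_s2 blocksQ t s B S; split.
- move=> T [/BK_t1[_ dimKT] /BQ_t2[_ qdimKT]].
  by rewrite /GrX /t -dimKT -qdimKT; apply: pdim_capv_qdim_addv.
- move=> S0 [/SK_s1[_ dimKS] /SQ_s2[_ qdimKS]].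
  by rewrite /GrX /s -dimKS -qdimKS; apply: pdim_capv_qdim_addv.
- move=> S0 [/blocksK[T1 BT1 sT1] /blocksQ[T2 BT2 sT2]].
  have [sKT2 _] := BQ_t2 _ BT2.
  have [T sTS0 [capKT addKT]] := exists_subv_with_capv_addv sT1 sKT2 sT2.
  by exists T; rewrite // /B capKT addKT.
Qed.
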